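(* The map $f$ defined below restricts to a bijection from $\mathcal{G}_1$ onto $\mathcal{A}_1$, and $f(\pi)$ is a partition of the same integer as $\pi$.
   Context: Partitions are nonincreasing finite sequences of positive integers; $m_j(\pi)$ is the multiplicity of $j$ in $\pi$, $\ell(\pi)$ the number of parts, and $\pi\cup\lambda$ the partition formed by all parts of both (as a multiset). $\langle a^{m}\rangle$ denotes the partition consisting of $m$ copies of $a$. $\mathcal{G}_2$ is the set of partitions $\pi$ with $m_1(\pi)\le 1$ and $m_j(\pi)+m_{j+1}(\pi)\le 2$ for all $j\ge1$. $\mathcal{G}_1$ is the set of partitions $\pi$ with $m_1(\pi)=0$ and $m_j(\pi)+m_{j+1}(\pi)\le 2$ for all $j\ge1$ (so $\mathcal G_1\subset\mathcal G_2$). For $\pi\in\mathcal{G}_2$ every part has multiplicity at most $2$. Let $D(\pi)$ be the number of distinct parts of multiplicity $2$, let $R_1(\pi)>R_2(\pi)>\dots>R_{D(\pi)}(\pi)$ be these parts, and set $R_{D(\pi)+1}(\pi)=0$, $R_0(\pi)=\infty$. For $0\le k\le D(\pi)$ let $\pi^{(k)}$ be the partition consisting of the parts of $\pi$ strictly between $R_{k+1}(\pi)$ and $R_k(\pi)$ (these parts are distinct). For a partition $\mu$ and integer $c$, $\mu+\langle c^{\ell(\mu)}\rangle$ denotes $\mu$ with $c$ added to each part. Define $$f(\pi)=\bigcup_{i=1}^{D(\pi)}\big\langle (2i)^{R_i(\pi)-R_{i+1}(\pi)-\ell(\pi^{(i)})}\big\rangle\ \cup\ \bigcup_{i=0}^{D(\pi)}\Big(\pi^{(i)}+\langle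 (2i)^{\ell(\pi^{(i)})}\rangle\Big).$$ For a partition $\lambda$, $R_1(\lambda)$ is its largest part of multiplicity $\ge2$ (or $0$ if none). $\mathcal{A}_1$ is the set of partitions $\lambda$ such that $m_j(\lambda)\le1$ for odd $j$, $m_j(\lambda)=0$ for odd $j<R_1(\lambda)+2$, and $m_j(\lambda)\ge 2$ for even $j$ with $0<j<R_1(\lambda)$. *)

From mathcomp Require Import all_boot.
Set Implicit Arguments. Unset Strict Implicit. Unset Printing Implicit Defensive.

Definition is_partition (p : seq nat) : bool :=
  sorted geq p && all (fun x => 0 < x) p.

Definition mult (j : nat) (p : seq nat) : nat := count_mem j p.

Definition in_G2 (p : seq nat) : Prop :=
  is_partition p /\ mult 1 p <= 1 /\
  (forall j, 1 <= j -> mult j p + mult j.+1 p <= 2).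

Definition in_G1 (p : seq nat) : Prop :=
  is_partition p /\ mult 1 p = 0 /\
  (forall j, 1 <= j -> mult j p + mult j.+1 p <= 2).

Definition Rlist (p : seq nat) : seq nat :=
  sort geq (undup [seq x <- p | mult x p == 2]).

Definition Dnum (p : seq nat) : nat := size (Rlist p).

(* R_k(p) for k >= 1 (R_{D+1} = 0 since nth defaults to 0) *)
Definition Rk (p : seq nat) (k : nat) : nat := nth 0 (Rlist p) k.-1.

(* p^(k): parts strictly between R_{k+1} and R_k, with R_0 = infinity *)
Definition piK (p : seq nat) (k : nat) : seq nat :=
  [seq x <- p | (Rk p k.+1 < x) && ((k == 0) || (x < Rk p k))].

(* the map f; the multiset union is realised by concatenation followed by
   sorting in nonincreasing order *)
Definition fmap (p : seq nat) : seq nat :=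
  sort geq
    (flatten [seq nseq (Rk p i - Rk p i.+1 - size (piK p i)) (2 * i)
             | i <- iota 1 (Dnum p)]
     ++ flatten [seq map (addn (2 * i)) (piK p i) | i <- iota 0 (Dnum p).+1]).

(* R_1(l): largest part of multiplicity >= 2, or 0 if none *)
Definition R1 (l : seq nat) : nat := \max_(x <- l | 2 <= mult x l) x.

Definition in_A1 (l : seq nat) : Prop :=
  is_partition l /\
  (forall j, odd j -> mult j l <= 1) /\
  (forall j, odd j -> j < R1 l + 2 -> mult j l = 0) /\
  (forall j, ~~ odd j -> 0 < j -> j < R1 l -> 2 <= mult j l).

From mathcomp Require Import all_boot.
From mathcomp Require Import zify.
Set Implicit Arguments. Unset Strict Implicit. Unset Printing Implicit Defensive.

(* A partition of G_1 with D >= 1 repeated parts is uniquely of the form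
   glue p r B: r = R_D is its smallest repeated part, B = pi^(D) consists of
   distinct parts in [2, r - 2], and the parts above r are those of some p in
   G_1 with D - 1 repeated parts, shifted by r.  Unfolding f, the image of
   glue p r B is f(p) with its shifted parts shifted further by r, together
   with r - |B| copies of 2D and the parts of B shifted by 2D.  Induction on D
   shows that f maps G_1 into A_1 with R_1 = 2D and preserves the weight.
   In an image, counting the parts below r + 2D determines r, then B, then
   f(p), whence injectivity.  For l in A_1 with R_1(l) = 2D, a cut r with
   m_2D(l) + #{parts of l in (2D, r + 2D - 2]} = r and r + 2D - 1 not a part
   always exists; reading B and f(p) off l at this cut gives surjectivity. *)

Lemma geq_total : total geq.
Proof. by move=> a b; apply: leq_total. Qed.

Lemma geq_trans : transitive geq.
Proof. by move=> a b c /= h1 h2; apply: leq_trans h2 h1. Qed.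

Lemma geq_anti : antisymmetric geq.
Proof. by move=> a b /andP[/= h1 h2]; apply/eqP; rewrite eqn_leq h1 h2. Qed.

Lemma sort_geq_perm s l : sorted geq l -> perm_eq s l -> sort geq s = l.
Proof.
move=> sl pe; rewrite (perm_sortP geq_total geq_trans geq_anti _ l pe).
by apply: sorted_sort sl; apply: geq_trans.
Qed.

Lemma perm_count_memP (T : eqType) (s1 s2 : seq T) :
  (forall v, count_mem v s1 = count_mem v s2) -> perm_eq s1 s2.
Proof. by move=> h; apply/allP => x _ /=; rewrite h. Qed.

Lemma count_mem_filter (T : eqType) (P : pred T) v (s : seq T) :
  count_mem v (filter P s) = P v * count_mem v s.
Proof.
rewrite count_filter; case Pv: (P v); rewrite ?mul1n ?mul0n.
  by apply: eq_count => x /=; case: eqP => // ->; rewrite Pv.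
by rewrite -(count_pred0 s); apply: eq_count => x /=; case: eqP => // ->; rewrite Pv.
Qed.

Lemma count_mem_map_addn k v s :
  count_mem v (map (addn k) s) = if k <= v then count_mem (v - k) s else 0.
Proof.
rewrite count_map; case: ifP => h.
  by apply: eq_count => x /=; apply/eqP/eqP; lia.
by rewrite -(count_pred0 s); apply: eq_count => x /=; apply/eqP; lia.
Qed.

Lemma mem_map_addn k x (s : seq nat) :
  (x \in map (addn k) s) = (k <= x) && (x - k \in s).
Proof. by rewrite -!has_pred1 !has_count count_mem_map_addn; case: ifP. Qed.

Lemma count_mem_gt0 (T : eqType) (s : seq T) x : (0 < count_mem x s) = (x \in s).
Proof. by rewrite -has_count has_pred1. Qed.

Lemma count_mem_le1_uniq (T : eqType) (s : seq T) :
  (forall x, count_mem x s <= 1) -> uniq s.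
Proof.
move=> h; apply: count_mem_uniq => x; have := h x.
case: (boolP (x \in s)) => [|/count_memPn -> //].
by rewrite -count_mem_gt0; case: (count_mem x s) => [|[]].
Qed.

Lemma uniq_count_mem_le1 (T : eqType) (s : seq T) x : uniq s -> count_mem x s <= 1.
Proof. by move=> u; rewrite count_uniq_mem //; case: (x \in s). Qed.

Lemma filter_predC_all (T : Type) (P : pred T) (s : seq T) :
  all (predC P) s -> filter P s = [::].
Proof.
by elim: s => //= x s IH /andP[/negbTE -> /IH].
Qed.

Lemma perm_cat_split (T : eqType) (P : pred T) (a a' b b' : seq T) :
  all P a -> all P a' -> all (predC P) b -> all (predC P) b' ->
  perm_eq (a ++ b) (a' ++ b') -> perm_eq a a' /\ perm_eq b b'.
Proof.
have predCC c : all P c -> all (predC (predC P)) c.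
  by move=> hc; apply/allP => x /(allP hc) /= ->.
move=> ha ha' hb hb' pe; split.
  have := perm_filter P pe; rewrite !filter_cat (all_filterP ha) (all_filterP ha').
  by rewrite !filter_predC_all ?cats0.
have := perm_filter (predC P) pe; rewrite !filter_cat.
rewrite (filter_predC_all (predCC _ ha)) (filter_predC_all (predCC _ ha')) /=.
by rewrite (all_filterP hb) (all_filterP hb').
Qed.

Lemma sumn_map_addn k s : sumn (map (addn k) s) = k * size s + sumn s.
Proof. by elim: s => [|x s IH] /=; [rewrite muln0 | rewrite IH mulnS; lia]. Qed.

Lemma sorted_geq_cat (s1 s2 : seq nat) : sorted geq s1 -> sorted geq s2 ->
  (forall x y, x \in s1 -> y \in s2 -> y <= x) -> sorted geq (s1 ++ s2).
Proof.
case: s1 => [//|x s1] /= h1 h2 h; rewrite cat_path h1 /=.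
case: s2 h2 h => //= y s2 -> h; rewrite andbT.
by apply: h; [exact: mem_last | rewrite inE eqxx].
Qed.

Lemma sorted_geq_shift k (s : seq nat) :
  sorted geq s -> sorted geq (map (addn k) s).
Proof. by apply: homo_sorted => a b /=; rewrite leq_add2l. Qed.

Lemma sorted_geq_sub k (s : seq nat) :
  sorted geq s -> sorted geq (map (subn^~ k) s).
Proof. by apply: homo_sorted => a b /=; apply: leq_sub2r. Qed.

Lemma sorted_geq_split (s : seq nat) r : sorted geq s ->
  s = [seq x <- s | r < x] ++ nseq (count_mem r s) r ++ [seq x <- s | x < r].
Proof.
elim: s => //= a s IH ps.
have /allP sa : all (geq a) s by exact: order_path_min geq_trans ps.
rewrite [in LHS](IH (path_sorted ps)).
have none_gt : r >= a -> [seq x <- s | r < x] = [::].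
  by move=> ra; apply: filter_predC_all; apply/allP => x /sa /=; lia.
case: (ltngtP r a) => h /=; rewrite ?add0n //.
  rewrite none_gt ?(ltnW h) // (count_memPn _) //.
  by apply/negP => /sa /=; lia.
by rewrite none_gt -h.
Qed.

Lemma uniq_size_interval (B : seq nat) a n :
  uniq B -> all (fun x => a <= x < a + n) B -> size B <= n.
Proof.
move=> u h; rewrite -(size_iota a n); apply: uniq_leq_size => // x /(allP h).
by rewrite mem_iota.
Qed.

Lemma mem_Rlist p x : (x \in Rlist p) = (mult x p == 2).
Proof.
rewrite /Rlist mem_sort mem_undup mem_filter andb_idr // => /eqP h.
by rewrite -count_mem_gt0 -/(mult x p) h.
Qed.

Lemma Rlist_uniq p : uniq (Rlist p).
Proof. by rewrite /Rlist sort_uniq undup_uniq. Qed.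

Lemma Rlist_sorted p : sorted geq (Rlist p).
Proof. exact: sort_sorted geq_total _. Qed.

Lemma Rlist_eq p s : sorted geq s -> uniq s ->
  (forall x, (x \in s) = (mult x p == 2)) -> Rlist p = s.
Proof.
move=> ss us hs; apply: (sorted_eq geq_trans geq_anti) => //; first exact: Rlist_sorted.
by apply: uniq_perm => //; [exact: Rlist_uniq | move=> x; rewrite mem_Rlist hs].
Qed.

Lemma Dnum0_mult p : Dnum p = 0 -> forall x, mult x p != 2.
Proof.
by move=> /eqP; rewrite size_eq0 => /eqP Rp x; rewrite -mem_Rlist Rp.
Qed.

Lemma G1_ge2 p : in_G1 p -> all (fun x => 2 <= x) p.
Proof.
case=> /andP[_ pos] [/count_memPn m1 _]; apply/allP => x xp.
by have := allP pos x xp; case: x xp => [|[|]] //; rewrite (negbTE m1).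
Qed.

Lemma G1_mult_le2 p x : in_G1 p -> mult x p <= 2.
Proof.
move=> G; case: x => [|x]; last by case: G => _ [_ h]; have := h x.+1 isT; lia.
by rewrite /mult (count_memPn _) //; apply/negP => /(allP (G1_ge2 G)).
Qed.

Lemma G1_Dnum0_uniq p : in_G1 p -> Dnum p = 0 -> uniq p.
Proof.
move=> G /Dnum0_mult D0; apply: count_mem_le1_uniq => x.
by have := G1_mult_le2 x G; have := D0 x; rewrite /mult; lia.
Qed.

Lemma Rk_Dnum_succ p : Rk p (Dnum p).+1 = 0.
Proof. by rewrite /Rk nth_default. Qed.

Definition f_even (p : seq nat) : seq nat :=
  flatten [seq nseq (Rk p i - Rk p i.+1 - size (piK p i)) (2 * i)
             | i <- iota 1 (Dnum p)].

Definition f_shift (p : seq nat) : seq nat :=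
  flatten [seq map (addn (2 * i)) (piK p i) | i <- iota 0 (Dnum p).+1].

Lemma fmapE p : fmap p = sort geq (f_even p ++ f_shift p).
Proof. by []. Qed.

(* When [glue_ok r B] holds and p is in G_1, the partition glue p r B has
   smallest repeated part R_D = r and B as its block pi^(D); its parts above r
   are those of p shifted by r. *)
Definition glue (p : seq nat) (r : nat) (B : seq nat) : seq nat :=
  map (addn r) p ++ r :: r :: B.

Definition glue_ok (r : nat) (B : seq nat) : bool :=
  [&& 2 <= r, uniq B, sorted geq B & all (fun x => 2 <= x <= r - 2) B].

Lemma glue_ok_size r B : glue_ok r B -> size B + 2 <= r.
Proof.
case/and4P=> hr uB _ aB; suff : size B <= r - 3 by lia.
apply: (uniq_size_interval (a := 2)) => //.
by apply/allP => x /(allP aB) /= /andP[h1 h2]; lia.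
Qed.

Section Glue.
Variables (p : seq nat) (r : nat) (B : seq nat).
Hypotheses (G : in_G1 p) (gB : glue_ok r B).

Local Notation q := (glue p r B).

Let hr : 2 <= r. Proof. by case/and4P: gB. Qed.
Let uB : uniq B. Proof. by case/and4P: gB. Qed.
Let sB : sorted geq B. Proof. by case/and4P: gB. Qed.

Let B_bounds x : x \in B -> 2 <= x /\ x + 2 <= r.
Proof. by case/and4P: gB => _ _ _ /allP aB /aB /andP[]; lia. Qed.

Lemma mult_glue x : mult x q =
  (if r <= x then mult (x - r) p else 0) + (r == x) * 2 + (x \in B).
Proof.
rewrite /mult count_cat count_mem_map_addn /= (count_uniq_mem _ uB).
by move: (if _ then _ else _) => A; case: (r == x); case: (x \in B) => /=; lia.
Qed.

Lemma mult_glue_lt x : x < r -> mult x q = (x \in B).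
Proof. by move=> h; rewrite mult_glue ifN ?(gtn_eqF h) //; lia. Qed.

Lemma mult_glue_r : mult r q = 2.
Proof.
rewrite mult_glue leqnn subnn eqxx /mult (count_memPn _); last first.
  by apply/negP => /(allP (G1_ge2 G)).
by case: (boolP (r \in B)) => // /B_bounds; lia.
Qed.

Lemma mult_glue_gt x : r < x -> mult x q = mult (x - r) p.
Proof.
move=> h; rewrite mult_glue ifT ?(ltn_eqF h) ?(ltnW h) //.
by case: (boolP (x \in B)) => [/B_bounds|]; [lia | rewrite !addn0].
Qed.

Lemma glue_in_G1 : in_G1 q.
Proof.
case: (G) => /andP[sp pos] [m1 h]; have a2 := G1_ge2 G.
split; [apply/andP; split | split].
- apply: sorted_geq_cat; first exact: sorted_geq_shift.
    rewrite -[r :: r :: B]/([:: r; r] ++ B); apply: sorted_geq_cat => //=.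
      by rewrite leqnn.
    by move=> a b /[swap] /B_bounds; rewrite !inE orbb => ? /eqP ->; lia.
  move=> a b /mapP[y _ ->]; rewrite !inE.
  by case/orP=> [/eqP ->|/orP[/eqP ->|/B_bounds]]; lia.
- rewrite all_cat /= all_map; apply/and4P; split; try lia.
    by apply/allP => x _ /=; lia.
  by apply/allP => x /B_bounds; lia.
- by rewrite mult_glue_lt //; case: (boolP (1 \in B)) => // /B_bounds; lia.
- move=> j j1; case: (ltngtP j.+1 r) => h2.
  + by rewrite !mult_glue_lt //; lia.
  + case: (ltngtP j r) => h3; first lia.
      have e : j.+1 - r = (j - r).+1 by lia.
      by rewrite !mult_glue_gt ?e //; apply: h; lia.
    by rewrite h3 mult_glue_r mult_glue_gt // subSnn m1.
  + rewrite mult_glue_lt ?h2 ?mult_glue_r //.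
    by case: (boolP (j \in B)) => // /B_bounds; lia.
Qed.

Lemma Rlist_glue : Rlist q = map (addn r) (Rlist p) ++ [:: r].
Proof.
have R2 y : y \in Rlist p -> 2 <= y.
  rewrite mem_Rlist => /eqP h; apply: (allP (G1_ge2 G)).
  by rewrite -count_mem_gt0 -/(mult y p) h.
apply: Rlist_eq.
- apply: sorted_geq_cat => //; first exact/sorted_geq_shift/Rlist_sorted.
  by move=> a b /mapP[y _ ->]; rewrite inE => /eqP ->; lia.
- rewrite cat_uniq map_inj_uniq ?Rlist_uniq /=; last exact: addnI.
  by rewrite orbF andbT; apply/negP => /mapP[y /R2]; lia.
- move=> x; rewrite mem_cat inE mem_map_addn mem_Rlist.
  case: (ltngtP x r) => h.
  + by rewrite mult_glue_lt //=; case: (x \in B).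
  + by rewrite mult_glue_gt //= orbF.
  + by rewrite h mult_glue_r orbT.
Qed.

Lemma Dnum_glue : Dnum q = (Dnum p).+1.
Proof. by rewrite /Dnum Rlist_glue size_cat size_map addn1. Qed.

Lemma Rk_glue k : 0 < k <= (Dnum p).+1 -> Rk q k = Rk p k + r.
Proof.
case/andP=> k0 k1; rewrite /Rk Rlist_glue nth_cat size_map -/(Dnum p).
case: ifPn => h; first by rewrite (nth_map 0) 1?addnC.
rewrite (_ : k.-1 = Dnum p) ?subnn; last lia.
by rewrite [nth _ (Rlist p) _]nth_default.
Qed.

Lemma Rk_glue_gt k : (Dnum p).+1 < k -> Rk q k = 0.
Proof. by move=> h; rewrite /Rk nth_default // -/(Dnum q) Dnum_glue; lia. Qed.

Lemma piK_glue k : k <= Dnum p -> piK q k = map (addn r) (piK p k).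
Proof.
move=> hk; rewrite /piK filter_cat filter_map Rk_glue; last lia.
rewrite [X in _ ++ X]filter_predC_all ?cats0.
  congr map; apply: eq_filter => y /=.
  rewrite [r + y]addnC ltn_add2r; congr andb.
  by case: k hk => //= k hk; rewrite Rk_glue ?ltn_add2r //; lia.
apply/allP => x; rewrite !inE => /orP[/eqP->|/orP[/eqP->|/B_bounds]] /=; lia.
Qed.

Lemma piK_glue_last : piK q (Dnum p).+1 = B.
Proof.
rewrite /piK Rk_glue_gt // Rk_glue ?leqnn // Rk_Dnum_succ add0n.
rewrite filter_cat filter_predC_all /=.
  by rewrite ltnn andbF; apply/all_filterP/allP => x /B_bounds /=; lia.
by apply/allP => x /mapP[y _ ->] /=; lia.
Qed.

Lemma f_even_glue :
  f_even q = f_even p ++ nseq (r - size B) (2 * (Dnum p).+1).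
Proof.
rewrite /f_even Dnum_glue -[(Dnum p).+1]addn1 iotaD map_cat flatten_cat /= cats0 add1n.
congr (_ ++ nseq _ _); rewrite ?addn1 //.
  congr flatten; apply/eq_in_map => i; rewrite mem_iota => hi /=.
  by rewrite piK_glue ?size_map ?Rk_glue ?subnDr //; lia.
rewrite piK_glue_last (Rk_glue_gt (k := _.+2)) // Rk_glue ?Rk_Dnum_succ ?subn0 //=.
Qed.

Lemma f_shift_glue :
  f_shift q = map (addn r) (f_shift p) ++ map (addn (2 * (Dnum p).+1)) B.
Proof.
rewrite /f_shift Dnum_glue -[(Dnum p).+2]addn1 iotaD map_cat flatten_cat.
rewrite [flatten (map _ [:: _])]/= cats0 add0n piK_glue_last map_flatten -map_comp.
congr (flatten _ ++ _).
apply/eq_in_map => i; rewrite mem_iota => hi /=.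
by rewrite piK_glue; [rewrite -!map_comp; apply: eq_map => y /=; rewrite addnCA | lia].
Qed.
End Glue.

Lemma count_mem_sub_filter (s : seq nat) k t j : k <= t.+1 ->
  count_mem j (map (subn^~ k) [seq x <- s | t < x]) =
  if t < j + k then count_mem (j + k) s else 0.
Proof.
move=> h; rewrite count_map count_filter; case: ifP => hj.
  by apply: eq_count => y /=; apply/andP/eqP => [[/eqP]|->]; lia.
by rewrite -(count_pred0 s); apply: eq_count => y /=; apply/andP => -[/eqP]; lia.
Qed.

Lemma G1_shift_down p r : in_G1 p -> mult r.+1 p = 0 ->
  in_G1 (map (subn^~ r) [seq x <- p | r < x]).
Proof.
case=> /andP[sp _] [_ h] mr1.
have mult_q j : 0 < j -> mult j (map (subn^~ r) [seq x <- p | r < x]) = mult (j + r) p.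
  by move=> j0; rewrite /mult count_mem_sub_filter ?ifT //; lia.
split; [apply/andP; split | split].
- exact/sorted_geq_sub/(sorted_filter geq_trans).
- by apply/allP => x /mapP[y]; rewrite mem_filter => /andP[yr _] -> /=; lia.
- by rewrite mult_q // add1n.
- by move=> j j1; rewrite !mult_q //; have := h (j + r); rewrite addSn; lia.
Qed.

Section SmallestRepeatedPart.
Variables (p : seq nat) (r : nat).
Hypotheses (G : in_G1 p) (mr : mult r p = 2)
  (r_min : forall x, mult x p == 2 -> r <= x).

Lemma smallest_repeated_ge2 : 2 <= r.
Proof. by apply: (allP (G1_ge2 G)); rewrite -count_mem_gt0 -/(mult r p) mr. Qed.

Lemma smallest_repeated_succ : mult r.+1 p = 0.
Proof. by case: G => _ [_ h]; have := h r (ltnW smallest_repeated_ge2); lia. Qed.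

Lemma glue_ok_below_smallest : glue_ok r [seq x <- p | x < r].
Proof.
have r2 := smallest_repeated_ge2; have [/andP[sp _] [_ h]] := G.
have mrm1 : mult r.-1 p = 0 by have := h r.-1; rewrite prednK; lia.
apply/and4P; split => //.
- apply: count_mem_le1_uniq => x; rewrite count_mem_filter.
  case: (ltnP x r) => hx; rewrite ?mul0n // mul1n.
  have := @r_min x; have := G1_mult_le2 x G; rewrite /mult; lia.
- exact: (sorted_filter geq_trans _ sp).
- apply/allP => x; rewrite mem_filter => /andP[xr xp] /=.
  have := allP (G1_ge2 G) x xp => /= ->; rewrite /=.
  suff : x != r.-1 by lia.
  by apply: contraTneq xp => ->; rewrite -count_mem_gt0 -/(mult _ p) mrm1.
Qed.

Lemma glue_smallest_repeated :
  glue (map (subn^~ r) [seq x <- p | r < x]) r [seq x <- p | x < r] = p.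
Proof.
have [/andP[sp _] _] := G.
rewrite [RHS](sorted_geq_split r sp) -/(mult r p) mr /glue -map_comp map_id_in //.
by move=> x; rewrite mem_filter => /andP[xr _] /=; lia.
Qed.
End SmallestRepeatedPart.

Lemma G1_glue_decomp p : in_G1 p -> 0 < Dnum p ->
  exists p' r B, [/\ in_G1 p', glue_ok r B & p = glue p' r B].
Proof.
move=> G D0.
have ex : exists x, mult x p == 2.
  move: D0; rewrite /Dnum; case E: (Rlist p) => [|x s] // _.
  by exists x; rewrite -mem_Rlist E mem_head.
case: (ex_minnP ex) => r /eqP mr r_min.
exists (map (subn^~ r) [seq x <- p | r < x]), r, [seq x <- p | x < r]; split.
- exact: (G1_shift_down G (smallest_repeated_succ G mr)).
- exact: glue_ok_below_smallest.
- by rewrite glue_smallest_repeated.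
Qed.

Lemma G1_ind (P : seq nat -> Prop) :
  (forall p, in_G1 p -> Dnum p = 0 -> P p) ->
  (forall p r B, in_G1 p -> glue_ok r B -> P p -> P (glue p r B)) ->
  forall p, in_G1 p -> P p.
Proof.
move=> base step p; elim: {p}(size p) {-2}p (leqnn (size p)) => [|n IH] p sz G.
  by apply: base => //; move: sz; rewrite leqn0 => /nilP ->.
case: (posnP (Dnum p)) => [|D0]; first exact: base.
have [p' [r [B [G' gB Ep]]]] := G1_glue_decomp G D0.
rewrite Ep; apply: step => //; apply: IH G'.
by move: sz; rewrite Ep /glue size_cat size_map /=; lia.
Qed.

Lemma f_even_Dnum0 p : Dnum p = 0 -> f_even p = [::].
Proof. by rewrite /f_even => ->. Qed.

Lemma f_shift_Dnum0 p : in_G1 p -> Dnum p = 0 -> f_shift p = p.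
Proof.
case=> /andP[_ pos] _ D0; rewrite /f_shift D0 /= cats0 /piK /Rk.
rewrite (_ : Rlist p = [::]) /=; last by apply/nilP; rewrite /nilp -/(Dnum p) D0.
rewrite map_id_in; last by move=> x /=.
by apply/all_filterP; rewrite (eq_all (a2 := fun x => 0 < x)) // => x; rewrite andbT.
Qed.

Lemma f_shift_lb p : in_G1 p -> all (fun y => 2 * Dnum p + 2 <= y) (f_shift p).
Proof.
elim/G1_ind => {p} [p G D0 | p r B G gB IH] /=.
  by rewrite f_shift_Dnum0 // D0; exact: G1_ge2.
have hr := glue_ok_size gB; have /and4P[_ _ _ aB] := gB.
rewrite f_shift_glue // Dnum_glue // all_cat !all_map; apply/andP; split.
  by apply/allP => y /(allP IH) /=; lia.
by apply/allP => y /(allP aB) /=; lia.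
Qed.

Lemma f_shift_uniq p : in_G1 p -> uniq (f_shift p).
Proof.
elim/G1_ind => {p} [p G D0 | p r B G gB IH] /=.
  by rewrite f_shift_Dnum0 //; exact: G1_Dnum0_uniq.
have lb := f_shift_lb G; have /and4P[_ uB _ aB] := gB.
rewrite f_shift_glue // cat_uniq !map_inj_uniq ?IH ?uB ?andbT /=; try exact: addnI.
apply/hasPn => x /mapP[y yB ->]; apply/negP => /mapP[z zb].
by have := allP aB y yB; have := allP lb z zb => /=; lia.
Qed.

Lemma f_even_range p : in_G1 p ->
  all (fun v => ~~ odd v && (0 < v <= 2 * Dnum p)) (f_even p).
Proof.
elim/G1_ind => {p} [p G D0 | p r B G gB IH] /=; first by rewrite f_even_Dnum0.
rewrite f_even_glue // Dnum_glue // all_cat all_nseq oddM /= leqnn; apply/andP; split.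
  by apply/allP => v /(allP IH) /=; lia.
by apply/orP; right; lia.
Qed.

Lemma count_f_even_out p j : in_G1 p -> odd j || (2 * Dnum p < j) ->
  count_mem j (f_even p) = 0.
Proof.
move=> /f_even_range /allP range h; apply/count_memPn/negP => /range /=.
by case/orP: h => [->|] //=; lia.
Qed.

Lemma count_f_even_repeated p : in_G1 p ->
  forall i, 0 < i <= Dnum p -> 2 <= count_mem (2 * i) (f_even p).
Proof.
elim/G1_ind => {p} [p G D0 i | p r B G gB IH i] /=; first lia.
rewrite Dnum_glue // => /andP[i0 hi].
have hr := glue_ok_size gB; rewrite f_even_glue // count_cat count_nseq.
case: (ltnP i (Dnum p).+1) => lt; first by rewrite (leq_trans (IH i _)) ?leq_addr //; lia.
by rewrite (_ : i = (Dnum p).+1) ?eqxx /=; lia.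
Qed.

Lemma size_f_shift p : in_G1 p -> size (f_shift p) + 2 * Dnum p = size p.
Proof.
elim/G1_ind => {p} [p G D0 | p r B G gB IH] /=; first by rewrite f_shift_Dnum0 // D0 addn0.
by rewrite f_shift_glue // Dnum_glue // /glue !size_cat !size_map /=; lia.
Qed.

Lemma sumn_f_even_shift p : in_G1 p -> sumn (f_even p) + sumn (f_shift p) = sumn p.
Proof.
elim/G1_ind => {p} [p G D0 | p r B G gB IH] /=.
  by rewrite f_even_Dnum0 // f_shift_Dnum0.
have hr := glue_ok_size gB; have sz := size_f_shift G.
rewrite f_even_glue // f_shift_glue // /glue !sumn_cat sumn_nseq !sumn_map_addn /=.
rewrite -IH -sz (_ : r = (r - size B) + size B); last lia.
set c := r - size B; nia.
Qed.

Lemma bigmax_mem (P : pred nat) (s : seq nat) :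
  \max_(x <- s | P x) x \in 0 :: [seq x <- s | P x].
Proof.
elim: s => [|a s IH]; first by rewrite big_nil inE.
rewrite big_cons /=; case: ifP => h; last by move: IH; rewrite !inE.
rewrite /maxn; case: ltnP => _; last by rewrite !inE eqxx orbT.
by move: IH; rewrite !inE => /orP[->|->]; rewrite ?orbT.
Qed.

Lemma R1_mem (l : seq nat) : R1 l \in 0 :: [seq x <- l | 2 <= mult x l].
Proof. exact: bigmax_mem. Qed.

Lemma R1_eq (l : seq nat) m :
  (forall x, 2 <= mult x l -> x <= m) -> m = 0 \/ 2 <= mult m l -> R1 l = m.
Proof.
move=> ub hm; apply/eqP; rewrite eqn_leq; apply/andP; split.
  by apply/bigmax_leqP_seq => x _; apply: ub.
case: hm => [-> //|hm]; apply: (@leq_bigmax_seq _ _ (fun x => 2 <= mult x l) id) => //.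
by rewrite -count_mem_gt0 -/(mult m l); lia.
Qed.

Lemma mult_gt_R1 (l : seq nat) x : R1 l < x -> mult x l <= 1.
Proof.
move=> h; rewrite leqNgt; apply/negP => m2.
suff : x <= R1 l by lia.
apply: (@leq_bigmax_seq _ _ (fun x => 2 <= mult x l) id) => //.
by rewrite -count_mem_gt0 -/(mult x l); lia.
Qed.

Lemma mult_fmap p j : mult j (fmap p) = count_mem j (f_even p) + count_mem j (f_shift p).
Proof. by rewrite /mult fmapE count_sort count_cat. Qed.

Lemma R1_fmap p : in_G1 p -> R1 (fmap p) = 2 * Dnum p.
Proof.
move=> G; apply: R1_eq => [x|].
  rewrite mult_fmap; case: (leqP x (2 * Dnum p)) => // h.
  rewrite count_f_even_out ?h ?orbT //.
  by have := uniq_count_mem_le1 x (f_shift_uniq G); lia.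
case: (posnP (Dnum p)) => D0; [left; lia | right].
rewrite mult_fmap (leq_trans (count_f_even_repeated G (i := Dnum p) _)) ?leq_addr //.
by rewrite D0 leqnn.
Qed.

Lemma sumn_fmap p : in_G1 p -> sumn (fmap p) = sumn p.
Proof.
move=> G; rewrite fmapE (perm_sumn (_ : perm_eq _ (f_even p ++ f_shift p))).
  by rewrite sumn_cat sumn_f_even_shift.
by rewrite perm_sort.
Qed.

Lemma fmap_in_A1 p : in_G1 p -> in_A1 (fmap p).
Proof.
move=> G; have lb := f_shift_lb G; have /allP range := f_even_range G.
split; [apply/andP; split | split; [|split]].
- exact: sort_sorted geq_total _.
- rewrite fmapE all_sort all_cat; apply/andP; split.
    by apply/allP => v /range /and3P[].
  by apply/allP => v /(allP lb) /=; lia.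
- move=> j oj; rewrite mult_fmap count_f_even_out ?oj //.
  exact: uniq_count_mem_le1 (f_shift_uniq G).
- move=> j oj; rewrite R1_fmap // mult_fmap count_f_even_out ?oj // => h.
  by apply/count_memPn/negP => /(allP lb) /=; lia.
- move=> j ej j0; rewrite R1_fmap // mult_fmap => h.
  have -> : j = 2 * j./2 by rewrite -[LHS]odd_double_half (negbTE ej) mul2n.
  by rewrite (leq_trans (count_f_even_repeated G (i := j./2) _)) ?leq_addr //; lia.
Qed.

Lemma fmap_components p q : in_G1 p -> in_G1 q -> fmap p = fmap q ->
  [/\ Dnum p = Dnum q, perm_eq (f_even p) (f_even q) & perm_eq (f_shift p) (f_shift q)].
Proof.
move=> Gp Gq e.
have DD : Dnum p = Dnum q by apply/eqP; rewrite -(eqn_pmul2l (isT : 0 < 2)) -!R1_fmap // e.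
have pe : perm_eq (f_even p ++ f_shift p) (f_even q ++ f_shift q).
  by apply/(perm_sortP geq_total geq_trans geq_anti).
have [] := @perm_cat_split _ (fun v => v <= 2 * Dnum p) _ _ _ _ _ _ _ _ pe => //.
- by apply/allP => v /(allP (f_even_range Gp)) /and3P[].
- by apply/allP => v /(allP (f_even_range Gq)) /and3P[]; rewrite DD.
- by apply/allP => v /(allP (f_shift_lb Gp)) /=; lia.
- by apply/allP => v /(allP (f_shift_lb Gq)) /=; rewrite DD; lia.
Qed.

Section ShiftedPartsInj.
Variables (K r r' : nat) (X X' B B' : seq nat).
Hypotheses (hX : all (fun y => K <= y) X) (hX' : all (fun y => K <= y) X')
  (gB : glue_ok r B) (gB' : glue_ok r' B') (hc : r - size B = r' - size B')
  (pe : perm_eq (map (addn r) X ++ map (addn K) B) (map (addn r') X' ++ map (addn K) B')).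

Let count_below_shift (s : seq nat) k t :
  all (fun y => K <= y) s -> t <= k -> count (fun y => y < t + K) (map (addn k) s) = 0.
Proof.
move=> hs tk; apply/eqP; rewrite -leqn0 leqNgt -has_count.
by apply/hasPn => y /mapP[z /(allP hs) /= hz ->]; lia.
Qed.

(* Counting the parts below r' + K on both sides: the parts of B at least r'
   are distinct and lie in [r', r - 2], which leaves too little room. *)
Lemma glue_shift_le : r <= r'.
Proof.
rewrite leqNgt; apply/negP => lt.
have /and4P[_ uB _ /allP aB] := gB; have /and4P[_ _ _ /allP aB'] := gB'.
have := glue_ok_size gB; have := glue_ok_size gB'.
move/permP: pe => /(_ (fun y => y < r' + K)); rewrite !count_cat.
rewrite (count_below_shift hX (ltnW lt)) (count_below_shift hX' (leqnn r')) !count_map.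
have -> : count (preim (addn K) (fun y => y < r' + K)) B' = size B'.
  by apply/eqP; rewrite -all_count; apply/allP => y /aB' /=; lia.
have -> : count (preim (addn K) (fun y => y < r' + K)) B = count (fun x => x < r') B.
  by apply: eq_count => y /=; lia.
have := count_predC (fun x => x < r') B.
have : count (predC (fun x => x < r')) B <= r - 1 - r'.
  rewrite -size_filter; apply: (uniq_size_interval (a := r')) (filter_uniq _ uB) _.
  by apply/allP => x; rewrite mem_filter => /andP[/= h1 /aB /= h2]; lia.
lia.
Qed.
End ShiftedPartsInj.

Lemma glue_shift_inj K r r' (X X' B B' : seq nat) :
  all (fun y => K <= y) X -> all (fun y => K <= y) X' ->
  glue_ok r B -> glue_ok r' B' -> r - size B = r' - size B' ->
  perm_eq (map (addn r) X ++ map (addn K) B) (map (addn r') X' ++ map (addn K) B') ->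
  [/\ r = r', B = B' & perm_eq X X'].
Proof.
move=> hX hX' gB gB' hc pe.
have rr : r = r'.
  apply/eqP; rewrite eqn_leq (glue_shift_le hX hX' gB gB' hc pe).
  by rewrite (glue_shift_le hX' hX gB' gB (esym hc)) // perm_sym.
subst r'.
have /and4P[_ _ sB /allP aB] := gB; have /and4P[_ _ sB' /allP aB'] := gB'.
have high s : all (fun y => K <= y) s -> all (fun y => r + K <= y) (map (addn r) s).
  by move=> hs; rewrite all_map; apply/allP => y /(allP hs) /=; lia.
have low s : {in s, forall x, 2 <= x <= r - 2} ->
    all (predC (fun y => r + K <= y)) (map (addn K) s).
  by move=> hs; rewrite all_map; apply/allP => y /hs /=; lia.
have [pX pB] := perm_cat_split (high _ hX) (high _ hX') (low _ aB) (low _ aB') pe.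
have eB : B = B'.
  apply: (sorted_eq geq_trans geq_anti sB sB').
  by move/perm_map_inj: pB; apply; exact: addnI.
by split => //; move/perm_map_inj: pX; apply; exact: addnI.
Qed.

Lemma fmap_glue_inj p q r r' B B' : in_G1 p -> in_G1 q -> glue_ok r B -> glue_ok r' B' ->
  fmap (glue p r B) = fmap (glue q r' B') -> [/\ r = r', B = B' & fmap p = fmap q].
Proof.
move=> Gp Gq gB gB' e.
have [DD pe ps] := fmap_components (glue_in_G1 Gp gB) (glue_in_G1 Gq gB') e.
move: DD pe ps; rewrite !Dnum_glue // !f_even_glue // !f_shift_glue // => -[DD].
rewrite -DD => pe ps.
set K := 2 * (Dnum p).+1 in pe ps.
have outK s : in_G1 s -> Dnum s = Dnum p -> count_mem K (f_even s) = 0.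
  by move=> Gs Ds; rewrite count_f_even_out // Ds ltn_pmul2l // ltnSn orbT.
have hc : r - size B = r' - size B'.
  move/permP: pe => /(_ (pred1 K)); rewrite !count_cat !count_nseq /= eqxx !mul1n.
  by rewrite !outK.
have lbK s : in_G1 s -> Dnum s = Dnum p -> all (fun y => K <= y) (f_shift s).
  by move=> Gs Ds; apply/allP => y /(allP (f_shift_lb Gs)) /=; rewrite Ds /K; lia.
have [<- <- pX] := glue_shift_inj (lbK _ Gp erefl) (lbK _ Gq (esym DD)) gB gB' hc ps.
split => //; rewrite !fmapE; apply/(perm_sortP geq_total geq_trans geq_anti).
by apply: perm_cat => //; move: pe; rewrite -hc perm_cat2r.
Qed.

Lemma fmap_inj p : in_G1 p -> forall q, in_G1 q -> fmap p = fmap q -> p = q.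
Proof.
elim/G1_ind => {p} [p Gp D0 | p r B Gp gB IH] q Gq e.
  have [DD _ ps] := fmap_components Gp Gq e.
  have [/andP[sp _] _] := Gp; have [/andP[sq _] _] := Gq.
  apply: (sorted_eq geq_trans geq_anti sp sq).
  by rewrite -(f_shift_Dnum0 Gp D0) -(f_shift_Dnum0 Gq) // -DD.
have [DD _ _] := fmap_components (glue_in_G1 Gp gB) Gq e.
have D0 : 0 < Dnum q by rewrite -DD Dnum_glue.
have [q' [r' [B' [Gq' gB' Eq]]]] := G1_glue_decomp Gq D0.
rewrite Eq in e *; have [<- <- e'] := fmap_glue_inj Gp Gq' gB gB' e.
by rewrite (IH _ Gq' e').
Qed.

Lemma Dnum_mult_le1 (l : seq nat) : (forall x, mult x l <= 1) -> Dnum l = 0.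
Proof.
rewrite /Dnum; case E: (Rlist l) => [//|x s] h.
by have := mem_Rlist l x; rewrite E mem_head => /esym/eqP e; have := h x; rewrite e.
Qed.

Lemma fmap_surj_base l : in_A1 l -> R1 l = 0 -> in_G1 l /\ fmap l = l.
Proof.
move=> [/andP[sl pos] [_ [oddz _]]] R0.
have m1 x : mult x l <= 1.
  case: x => [|x]; last by apply: mult_gt_R1; rewrite R0.
  by rewrite /mult (count_memPn _) //; apply/negP => /(allP pos).
have G : in_G1 l.
  split; first by rewrite /is_partition sl pos.
  split; first by apply: oddz; rewrite ?R0.
  by move=> j _; have := m1 j; have := m1 j.+1; lia.
have D0 := Dnum_mult_le1 m1.
by split => //; rewrite fmapE f_even_Dnum0 // f_shift_Dnum0 //; apply: sort_geq_perm.
Qed.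

Lemma count_interval_succ (l : seq nat) K T : K <= T ->
  count (fun y => K < y <= T.+1) l = count (fun y => K < y <= T) l + count_mem T.+1 l.
Proof.
move=> h; rewrite -count_predUI addnC (@eq_count _ (predI _ _) pred0) ?count_pred0.
  by apply: eq_count => y /=; rewrite eq_sym; case: (ltngtP y T.+1); lia.
by move=> y /=; rewrite eq_sym; case: eqP; lia.
Qed.

(* The least r with c <= r and c + #{y in l | K < y <= r + K - 1} <= r exists
   (r = c + size l qualifies); its minimality forces equality one step lower. *)
Lemma exists_cut (l : seq nat) K c : 2 <= c -> exists2 r, c <= r &
  (c + count (fun y => K < y <= r + K - 2) l == r) && (r + K - 1 \notin l).
Proof.
move=> c2; pose cnt T := count (fun y => K < y <= T) l.
have ex : exists r, (c <= r) && (c + cnt (r + K - 1) <= r).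
  by exists (c + size l); rewrite leq_addr leq_add2l count_size.
case: (ex_minnP ex) => r /andP[cr hr] r_min; exists r => //.
have g : c + cnt (r + K - 2) = r.
  apply/eqP; rewrite eqn_leq; apply/andP; split.
    apply: leq_trans hr; rewrite leq_add2l; apply: sub_count => y /=.
    by case/andP=> -> /= h; lia.
  case: (ltngtP c r) => h; last by rewrite -h leq_addr.
    have e : r.-1 + K - 1 = r + K - 2 by lia.
    have cr1 : c <= r.-1 by lia.
    have := @r_min r.-1; rewrite e cr1 /=; move: (cnt _) => n.
    by case: leqP => H; [move/(_ isT) | move=> _]; lia.
  by move: cr; rewrite leqNgt h.
have step : cnt (r + K - 1) = cnt (r + K - 2) + count_mem (r + K - 1) l.
  rewrite /cnt (_ : r + K - 1 = (r + K - 2).+1) ?count_interval_succ //; lia.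
by move: hr; rewrite g eqxx -count_mem_gt0 step addnA g; lia.
Qed.

Lemma count_mem_intervals (l : seq nat) K T v : K <= T ->
  count_mem v [seq y <- l | y < K] + (K == v) * count_mem K l +
  count_mem v [seq y <- l | T < y] + count_mem v [seq y <- l | K < y <= T] =
  count_mem v l.
Proof.
move=> KT; rewrite !count_mem_filter.
case: eqP => [<-|/eqP ne]; first by rewrite ltnn ltnNge KT /= !mul0n mul1n; lia.
rewrite mul0n addn0; move: (count_mem v l) => m.
case: (ltngtP v K) => [lt | gt | e]; last by rewrite e eqxx in ne.
  by rewrite ltnNge (ltnW (leq_trans lt KT)) /=; lia.
by case: (leqP v T) => /=; lia.
Qed.

(* Inverse of one gluing step on the image side: with K = R_1(l) and a cut r
   from [exists_cut], the parts of l in (K, r + K - 2] are the parts of B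
   shifted by K, and the parts below K together with the parts above
   r + K - 1 shifted down by r form the image of the smaller partition. *)
Definition peel_gap (l : seq nat) (K r : nat) : seq nat :=
  map (subn^~ K) [seq y <- l | K < y <= r + K - 2].

Definition peel_rest (l : seq nat) (K r : nat) : seq nat :=
  sort geq ([seq y <- l | y < K] ++ map (subn^~ r) [seq y <- l | r + K - 2 < y]).

Section Peel.
Variables (D : nat) (l : seq nat) (r : nat).
Local Notation K := (2 * D.+1).
Hypotheses (A : in_A1 l) (RK : R1 l = K) (cr : mult K l <= r)
  (hcut : mult K l + count (fun y => K < y <= r + K - 2) l = r)
  (nr : r + K - 1 \notin l).

Let sorted_l : sorted geq l. Proof. by case: A => /andP[]. Qed.
Let odd1 j : odd j -> mult j l <= 1. Proof. by case: A => _ [h _]; apply: h. Qed.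
Let oddz j : odd j -> j < K + 2 -> mult j l = 0.
Proof. by case: A => _ [_ [h _]]; rewrite RK in h; apply: h. Qed.
Let evn j : ~~ odd j -> 0 < j -> j < K -> 2 <= mult j l.
Proof. by case: A => _ [_ [_ h]]; rewrite RK in h; apply: h. Qed.
Let above_K x : K < x -> mult x l <= 1.
Proof. by move=> h; apply: mult_gt_R1; rewrite RK. Qed.

Lemma mult_R1_ge2 : 2 <= mult K l.
Proof.
by have := R1_mem l; rewrite RK inE mem_filter => /orP[/eqP|/andP[]] //; lia.
Qed.

Let r2 : 2 <= r. Proof. by have := mult_R1_ge2; lia. Qed.

Lemma glue_ok_peel_gap : glue_ok r (peel_gap l K r).
Proof.
apply/and4P; split => //.
- rewrite map_inj_in_uniq.
    apply: count_mem_le1_uniq => x; rewrite count_mem_filter.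
    by case: andP => [[/above_K] | _]; rewrite ?mul1n ?mul0n.
  by move=> x y; rewrite !mem_filter => /andP[/andP[hx _] _] /andP[/andP[hy _] _] /=; lia.
- exact/sorted_geq_sub/(sorted_filter geq_trans).
- apply/allP => x /mapP[y]; rewrite mem_filter => /andP[/andP[h1 h2] yl] -> /=.
  suff : y != K.+1 by lia.
  apply: contraTneq yl => ->; rewrite -count_mem_gt0 -/(mult _ l) oddz //.
    by rewrite oddS oddM.
  by rewrite addn2.
Qed.

Lemma size_peel_gap : size (peel_gap l K r) = r - mult K l.
Proof. by rewrite size_map size_filter; lia. Qed.

Let no_cut_end : count_mem (r + K - 1) l = 0.
Proof. by apply/count_memPn. Qed.

Lemma mult_peel_rest j :
  mult j (peel_rest l K r) = if j < K then mult j l else mult (j + r) l.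
Proof.
rewrite /mult /peel_rest count_sort count_cat count_mem_filter.
rewrite count_mem_sub_filter; last lia.
case: (ltnP j K) => hj; rewrite /= ?mul1n ?mul0n.
  case: ifP => h; last by rewrite addn0.
  by rewrite (_ : j + r = r + K - 1) ?no_cut_end ?addn0 //; lia.
by rewrite ifT //; lia.
Qed.

Lemma R1_peel_rest : R1 (peel_rest l K r) = 2 * D.
Proof.
apply: R1_eq => [x|].
  rewrite mult_peel_rest; case: (ltnP x K) => hx h; last by have := @above_K (x + r); lia.
  case: (leqP x (2 * D)) => // hx2.
  have ex : x = (2 * D).+1 by lia.
  suff : mult x l = 0 by lia.
  by apply: oddz; rewrite ex ?oddS ?oddM //; lia.
case: (posnP D) => D0; [left; lia | right].
by rewrite mult_peel_rest ifT; [apply: evn; rewrite ?oddM //; lia | lia].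
Qed.

Lemma peel_rest_in_A1 : in_A1 (peel_rest l K r).
Proof.
have [/andP[_ /allP pos] _] := A.
split; [apply/andP; split | split; [|split]].
- exact: sort_sorted geq_total _.
- rewrite /peel_rest all_sort all_cat; apply/andP; split.
    by apply/allP => x; rewrite mem_filter => /andP[_ /pos].
  apply/allP => x /mapP[y]; rewrite mem_filter => /andP[h1 yl] -> /=.
  suff : y != r + K - 1 by lia.
  by apply: contraNneq nr => <-.
- move=> j oj; rewrite mult_peel_rest.
  by case: ifP => hj; [apply: odd1 | apply: above_K; lia].
- move=> j oj; rewrite R1_peel_rest => hj.
  by rewrite mult_peel_rest ifT; [apply: oddz | ]; lia.
- move=> j ej j0; rewrite R1_peel_rest => hj.
  by rewrite mult_peel_rest ifT; [apply: evn | ]; lia.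
Qed.

Lemma fmap_glue_peel p : in_G1 p -> fmap p = peel_rest l K r ->
  fmap (glue p r (peel_gap l K r)) = l.
Proof.
move=> G fp.
have DD : Dnum p = D.
  by apply/eqP; rewrite -(eqn_pmul2l (isT : 0 < 2)) -R1_fmap // fp R1_peel_rest.
have gap_hi y : y \in [seq y <- l | r + K - 2 < y] -> r + K <= y.
  rewrite mem_filter => /andP[h yl]; suff : y != r + K - 1 by lia.
  by apply: contraNneq nr => <-.
have [pe ps] : perm_eq (f_even p) [seq y <- l | y < K] /\
    perm_eq (f_shift p) (map (subn^~ r) [seq y <- l | r + K - 2 < y]).
  apply: (@perm_cat_split _ (fun y => y < K)).
  - by apply/allP => v /(allP (f_even_range G)) /and3P[_ _]; rewrite DD; lia.
  - by apply/allP => v; rewrite mem_filter => /andP[].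
  - by apply/allP => v /(allP (f_shift_lb G)) /=; rewrite DD; lia.
  - by apply/allP => x /mapP[y /gap_hi hy ->] /=; lia.
  by apply/(perm_sortP geq_total geq_trans geq_anti); rewrite -fmapE fp.
have e_hi : map (addn r) (map (subn^~ r) [seq y <- l | r + K - 2 < y]) =
    [seq y <- l | r + K - 2 < y].
  by rewrite -map_comp map_id_in // => y /gap_hi /= hy; lia.
have e_gap : map (addn K) (peel_gap l K r) = [seq y <- l | K < y <= r + K - 2].
  by rewrite -map_comp map_id_in // => y; rewrite mem_filter => /andP[/andP[h _] _] /=; lia.
have gB := glue_ok_peel_gap.
rewrite fmapE f_even_glue // f_shift_glue // DD; apply: sort_geq_perm => //.
apply: perm_count_memP => v; rewrite !count_cat (permP pe) count_nseq.
rewrite (permP (perm_map (addn r) ps)) e_hi e_gap size_peel_gap.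
rewrite (_ : r - (r - _) = mult K l).
  by rewrite -(count_mem_intervals l v (_ : K <= r + K - 2)) ?addnA //; lia.
by have := mult_R1_ge2; lia.
Qed.
End Peel.

Lemma fmap_surj_R1 D l : in_A1 l -> R1 l = 2 * D -> exists2 p, in_G1 p & fmap p = l.
Proof.
elim: D l => [|D IH] l A RK; first by have [G fl] := fmap_surj_base A RK; exists l.
have [r cr /andP[/eqP hcut nr]] := exists_cut l (2 * D.+1) (mult_R1_ge2 RK).
have [p G fp] := IH _ (peel_rest_in_A1 A RK cr hcut nr) (R1_peel_rest A RK cr hcut nr).
exists (glue p r (peel_gap l (2 * D.+1) r)).
  exact: glue_in_G1 G (glue_ok_peel_gap A RK cr hcut nr).
exact: (fmap_glue_peel A RK cr hcut nr G fp).
Qed.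

Lemma R1_even_A1 l : in_A1 l -> ~~ odd (R1 l).
Proof.
case=> _ [odd1 _]; have := R1_mem l.
rewrite inE mem_filter => /orP[/eqP -> // | /andP[h _]].
by apply/negP => /odd1; lia.
Qed.

Lemma fmap_surj l : in_A1 l -> exists2 p, in_G1 p & fmap p = l.
Proof.
move=> A; apply: (fmap_surj_R1 (D := (R1 l)./2)) => //.
by rewrite mul2n even_halfK ?R1_even_A1.
Qed.

Theorem theorem3 :
  (forall p, in_G1 p -> in_A1 (fmap p)) /\
  (forall p q, in_G1 p -> in_G1 q -> fmap p = fmap q -> p = q) /\
  (forall l, in_A1 l -> exists p, in_G1 p /\ fmap p = l) /\
  (forall p, in_G1 p -> sumn (fmap p) = sumn p).
Proof.
split; first exact: fmap_in_A1.
split; first by move=> p q Gp; apply: fmap_inj.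
split; last exact: sumn_fmap.
by move=> l /fmap_surj[p G fp]; exists p.
Qed.
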